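(* Let $c, r$ be positive integers. Call a set of squares of an $m \times n$ grid a valid $(c,r)$-tree configuration if every column contains exactly $c$ of the chosen squares (trees), every row contains exactly $r$ trees, and no two trees are in squares adjacent horizontally, vertically, or diagonally. Then: (i) if a valid $(c,r)$-tree configuration exists on an $m \times n$ grid with $(m,n) \neq (1,1)$, then $m \ge 4c$ and $n \ge 4r$ (the $1 \times 1$ grid admits one only when $c=r=1$); (ii) the $4c \times 4r$ grid admits exactly two valid $(c,r)$-tree configurations. Index rows $1,\dots,4c$ from top and columns $1,\dots,4r$ from left. These configurations are the following. The first has trees at $(2i-1,2j)$ for $1\le i\le c,\ 1\le j\le r$; at $(2i,2j)$ for $1\le i\le c,\ r<j\le 2r$; at $(2i-1,2j-1)$ for $c<i\le 2c,\ 1\le j\le r$; and at $(2i,2j-1)$ for $c<i\le 2c,\ r<j\le 2r$. The second is the image of the first under the row reflection $(k,\ell)\mapsto(4c+1-k,\ell)$.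
   Context: A valid configuration of trees for a $(c,r)$-tree Parks puzzle on an $m\times n$ grid is a set of squares satisfying the column, row and non-adjacency conditions stated in the claim. The paper calls the two configurations on the $4c\times 4r$ grid ''Shuriken arrangements''. Equivalently: divide the $4c\times 4r$ grid into $2\times 2$ boxes and into four quadrants of size $2c \times 2r$. Within each quadrant every box has its tree in the same position. In the first arrangement this position is the top-right cell of the box in the upper-left quadrant, the bottom-right cell in the upper-right quadrant, the top-left cell in the lower-left quadrant, and the bottom-left cell in the lower-right quadrant. *)

From mathcomp Require Import all_boot.
Set Implicit Arguments. Unset Strict Implicit. Unset Printing Implicit Defensive.

(* An m x n grid: cells are pairs (row, column) in 'I_m * 'I_n (0-indexed;
   row k here is row k+1 of the paper, counted from the top). *)

Definition king_adj (m n : nat) (p q : 'I_m * 'I_n) : bool :=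
  [&& p != q,
      (p.1 <= q.1 + 1) && (q.1 <= p.1 + 1) &
      (p.2 <= q.2 + 1) && (q.2 <= p.2 + 1)].

Definition valid_config (c r m n : nat) (S : {set 'I_m * 'I_n}) : Prop :=
  (forall j : 'I_n, #|[set p in S | p.2 == j]| = c) /\
  (forall i : 'I_m, #|[set p in S | p.1 == i]| = r) /\
  (forall p q, p \in S -> q \in S -> ~~ king_adj p q).

(* First Shuriken arrangement on the 4c x 4r grid, stated in 1-indexed
   coordinates (k, l) = (row+1, column+1) exactly as in the paper. *)
Definition shuriken1_at (c r k l : nat) : bool :=
  [exists i : 'I_(2 * c).+1, exists j : 'I_(2 * r).+1,
     [&& 0 < i, 0 < j &
       [|| [&& i <= c, j <= r, k == 2 * i - 1 & l == 2 * j],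
           [&& i <= c, r < j, k == 2 * i & l == 2 * j],
           [&& c < i, j <= r, k == 2 * i - 1 & l == 2 * j - 1] |
           [&& c < i, r < j, k == 2 * i & l == 2 * j - 1]]]].

Definition shuriken1 (c r : nat) : {set 'I_(4 * c) * 'I_(4 * r)} :=
  [set p : 'I_(4 * c) * 'I_(4 * r) | shuriken1_at c r p.1.+1 p.2.+1].

Definition shuriken2 (c r : nat) : {set 'I_(4 * c) * 'I_(4 * r)} :=
  [set p : 'I_(4 * c) * 'I_(4 * r) | (rev_ord p.1, p.2) \in shuriken1 c r].

From mathcomp Require Import all_boot zify.
Set Implicit Arguments. Unset Strict Implicit. Unset Printing Implicit Defensive.

(* Two adjacent columns hold 2c trees, and two consecutive rows never both meet them
   (the four cells are pairwise adjacent), so 2 (2c) <= m + [row 0 meets them]; taking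
   the pair of columns through a tree of row 1 leaves row 0 empty, whence m >= 4c.
   On the 4c x 4r grid the count is tight: each of the 2c x 2r boxes of size 2 x 2 holds
   exactly one tree, and comparing neighbouring boxes shows that the column of this tree
   inside its box depends only on the box row a (left iff l a), its row only on the box
   column b (top iff u b).  Now l takes the value true c times out of 2c and u r times
   out of 2r, and trees in facing corners of diagonally neighbouring boxes would touch
   unless l and u never rise at the same time and never fall at the same time.  Hence
   one of l, u is nondecreasing and the other nonincreasing; the two choices are the two
   Shuriken arrangements. *)

Lemma sum_negb k (s : nat -> bool) : \sum_(i < k) ~~ s i = k - \sum_(i < k) s i.
Proof.
suff : \sum_(i < k) ~~ s i + \sum_(i < k) s i = k by lia.
rewrite -big_split (eq_bigr (fun=> 1)) => [|i _]; last by case: (s i).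
by rewrite sum_nat_const card_ord muln1.
Qed.

Lemma sum_bool_full k (s : nat -> bool) :
  \sum_(i < k) s i = k -> forall i, i < k -> s i.
Proof.
move=> sum_s i lt_ik.
have : \sum_(i < k) ~~ s i == 0 by rewrite sum_negb sum_s subnn.
by rewrite sum_nat_eq0 => /forallP /(_ (Ordinal lt_ik)); case: (s i).
Qed.

Lemma sum_pairs k (F : nat -> nat) :
  \sum_(i < 2 * k) F i = \sum_(a < k) (F (2 * a) + F (2 * a).+1).
Proof.
elim: k => [|k IH]; first by rewrite !big_ord0.
by rewrite mulnSr addn2 !big_ord_recr /= IH addnA.
Qed.

Lemma sum_no_consecutive k (g : nat -> bool) :
  (forall i, i.+1 < k -> ~~ (g i && g i.+1)) -> 2 * \sum_(i < k) g i <= k + g 0.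
Proof.
elim: k g => [|k IH] g sep; first by rewrite big_ord0.
rewrite big_ord_recl; under eq_bigr do rewrite lift0.
have /= := IH (fun i => g i.+1) (fun i lt_ik => sep i.+1 lt_ik); have := sep 0; lia.
Qed.

Lemma sum_geq_half k (y : bool) : \sum_(a < 2 * k) ((k <= a) (+) y) = k.
Proof.
have half : \sum_(a < 2 * k) (k <= a) = k.
  rewrite mul2n -addnn big_split_ord /= big1 => [|a _]; last by rewrite leqNgt ltn_ord.
  rewrite (eq_bigr (fun=> 1)) => [|a _]; last by rewrite leq_addr.
  by rewrite sum_nat_const card_ord muln1.
case: y; last by under eq_bigr do rewrite addbF.
by under eq_bigr do rewrite addbT; rewrite sum_negb half; lia.
Qed.

Lemma nonincreasingE k (s : nat -> bool) :
  (forall a, a.+1 < k -> s a.+1 -> s a) ->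
  forall a, a < k -> s a = (a < \sum_(i < k) s i).
Proof.
elim: k s => [|k IH] s mono a // lt_ak; rewrite big_ord_recl.
case s0: (s 0).
  under eq_bigr do rewrite lift0.
  case: a lt_ak => [|a] lt_ak //.
  by rewrite (IH (fun i => s i.+1)) // => b lt_bk; apply: mono.
have s_false b : b < k.+1 -> s b = false.
  elim: b => [|b IHb] lt_bk //; apply/negbTE/negP => /(mono b lt_bk).
  by rewrite IHb // ltnW.
by rewrite big1 => [|i _]; rewrite s_false.
Qed.

Lemma nondecreasingE k (s : nat -> bool) :
  (forall a, a.+1 < k -> s a -> s a.+1) ->
  forall a, a < k -> s a = (k - \sum_(i < k) s i <= a).
Proof.
move=> mono a lt_ak.
have mono' b : b.+1 < k -> ~~ s b.+1 -> ~~ s b by move=> lt_bk; apply: contra (mono b lt_bk).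
by rewrite -[s a]negbK (nonincreasingE mono' lt_ak) sum_negb -leqNgt.
Qed.

Definition ascent (s : nat -> bool) (a : nat) : bool := ~~ s a && s a.+1.
Definition descent (s : nat -> bool) (a : nat) : bool := s a && ~~ s a.+1.

Definition admissible (c r : nat) (l u : nat -> bool) : Prop :=
  [/\ \sum_(a < 2 * c) l a = c, \sum_(b < 2 * r) u b = r,
      forall a b, a.+1 < 2 * c -> b.+1 < 2 * r -> ~~ (ascent l a && ascent u b) &
      forall a b, a.+1 < 2 * c -> b.+1 < 2 * r -> ~~ (descent l a && descent u b)].

Lemma admissible_negb c r l u :
  admissible c r l u -> admissible c r (fun a => ~~ l a) (fun b => ~~ u b).
Proof.
case=> sum_l sum_u asc desc; split.
- by rewrite sum_negb sum_l; lia.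
- by rewrite sum_negb sum_u; lia.
- by move=> a b lt_a lt_b; rewrite /ascent !negbK; apply: desc.
- by move=> a b lt_a lt_b; rewrite /descent !negbK; apply: asc.
Qed.

Lemma admissible_shape_l0 c r l u : 0 < c -> 0 < r -> admissible c r l u -> l 0 = false ->
  (forall a, a < 2 * c -> l a = (c <= a)) /\ (forall b, b < 2 * r -> u b = (b < r)).
Proof.
move=> c_gt0 r_gt0 [sum_l sum_u asc desc] l0.
have u_noninc b : b.+1 < 2 * r -> u b.+1 -> u b.
  move=> lt_b ub1; apply: contraT => nub.
  have l_noninc a : a.+1 < 2 * c -> l a.+1 -> l a.
    move=> lt_a la1; apply: contraT => nla.
    by have := asc a b lt_a lt_b; rewrite /ascent nla la1 nub ub1.
  by have := nonincreasingE l_noninc (a := 0); rewrite l0 sum_l c_gt0; lia.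
have uE := nonincreasingE u_noninc; rewrite sum_u in uE.
have l_nondec a : a.+1 < 2 * c -> l a -> l a.+1.
  move=> lt_a la; apply: contraT => nla1.
  have := desc a r.-1 lt_a; rewrite /descent la nla1 prednK // !uE //; lia.
split => [a lt_a | b lt_b]; last exact: uE.
by rewrite (nondecreasingE l_nondec lt_a) sum_l (_ : 2 * c - c = c) //; lia.
Qed.

Lemma admissible_shape c r l u : 0 < c -> 0 < r -> admissible c r l u ->
  exists flip : bool,
    (forall a, a < 2 * c -> l a = (c <= a) (+) flip) /\
    (forall b, b < 2 * r -> u b = (b < r) (+) flip).
Proof.
move=> c_gt0 r_gt0 adm; case l0: (l 0).
  have /= := admissible_shape_l0 c_gt0 r_gt0 (admissible_negb adm).
  rewrite l0 => /(_ erefl) [lE uE].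
  exists true; split=> [a lt_a | b lt_b]; rewrite addbT.
    by rewrite -(lE a lt_a) negbK.
  by rewrite -(uE b lt_b) negbK.
have [lE uE] := admissible_shape_l0 c_gt0 r_gt0 adm l0.
by exists false; split=> [a lt_a | b lt_b]; rewrite addbF ?lE ?uE.
Qed.

(* One tree in every 2 x 2 box (i./2, j./2): in the left column of the box iff
   [l (i./2)], in its top row iff [u (j./2)]. *)
Definition box_pattern (l u : nat -> bool) (i j : nat) : bool :=
  (odd i (+) u j./2) && (odd j (+) l i./2).

Lemma box_patternC l u i j : box_pattern l u i j = box_pattern u l j i.
Proof. by rewrite /box_pattern andbC. Qed.

Lemma box_patternE l u a b (x y : bool) :
  box_pattern l u (2 * a + x) (2 * b + y) = (x (+) u b) && (y (+) l a).
Proof.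
rewrite /box_pattern; have [-> ->] : odd (2 * a + x) = x /\ odd (2 * b + y) = y by lia.
by have [-> ->] : (2 * a + x)./2 = a /\ (2 * b + y)./2 = b by lia.
Qed.

Lemma eq_box_pattern c r l u l' u' i j :
  (forall a, a < 2 * c -> l a = l' a) -> (forall b, b < 2 * r -> u b = u' b) ->
  i < 4 * c -> j < 4 * r -> box_pattern l u i j = box_pattern l' u' i j.
Proof. by move=> lE uE lt_i lt_j; rewrite /box_pattern lE ?uE //; lia. Qed.

Lemma sum_box_pattern_col k l u j :
  \sum_(i < 4 * k) box_pattern l u i j = \sum_(a < 2 * k) (l a (+) odd j).
Proof.
rewrite (_ : 4 * k = 2 * (2 * k)); last by rewrite mulnA.
rewrite (sum_pairs _ (box_pattern l u ^~ j)); apply: eq_bigr => a _.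
have := box_patternE l u a j./2 false (odd j); have := box_patternE l u a j./2 true (odd j).
rewrite /= (_ : 2 * j./2 + odd j = j) ?addn0 ?addn1; last by lia.
by move=> -> ->; case: (u _); case: (l a); case: (odd j).
Qed.

Lemma sum_box_pattern_row k l u i :
  \sum_(j < 4 * k) box_pattern l u i j = \sum_(b < 2 * k) (u b (+) odd i).
Proof. by under eq_bigr do rewrite box_patternC; apply: sum_box_pattern_col. Qed.

Definition close (i i' : nat) : bool := (i <= i' + 1) && (i' <= i + 1).

(* Trees are given on nat coordinates; only the cells of the m x n grid matter. *)
Definition tree_config (c r m n : nat) (t : nat -> nat -> bool) : Prop :=
  [/\ forall j, j < n -> \sum_(i < m) t i j = c,
      forall i, i < m -> \sum_(j < n) t i j = r &
      forall i j i' j', i < m -> i' < m -> j < n -> j' < n ->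
        t i j -> t i' j' -> close i i' -> close j j' -> i = i' /\ j = j'].

Section TreeConfig.
Variables (c r m n : nat) (t : nat -> nat -> bool).
Hypothesis config_t : tree_config c r m n t.

Lemma tree_config_tr : tree_config r c n m (fun j i => t i j).
Proof.
case: config_t => col row apart; split=> // j i j' i' lt_j lt_j' lt_i lt_i' tij tij' cj ci.
by have [-> ->] := apart i j i' j' lt_i lt_i' lt_j lt_j' tij tij' ci cj.
Qed.

Lemma eq_tree_config t' :
  (forall i j, i < m -> j < n -> t i j = t' i j) -> tree_config c r m n t'.
Proof.
case: config_t => col row apart tE; split.
- by move=> j lt_j; rewrite -(col j lt_j); apply: eq_bigr => i _; rewrite tE.
- by move=> i lt_i; rewrite -(row i lt_i); apply: eq_bigr => j _; rewrite tE.
- by move=> i j i' j' lt_i lt_i' lt_j lt_j'; rewrite -!tE //; apply: apart.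
Qed.

Lemma block_le1 i j : i.+1 < m -> j.+1 < n ->
  t i j + t i j.+1 + t i.+1 j + t i.+1 j.+1 <= 1.
Proof.
case: config_t => _ _ apart lt_i lt_j.
have := apart i j i j.+1; have := apart i j i.+1 j; have := apart i j i.+1 j.+1.
have := apart i j.+1 i.+1 j; have := apart i j.+1 i.+1 j.+1; have := apart i.+1 j i.+1 j.+1.
rewrite /close; lia.
Qed.

Lemma sum_column_pair j : j.+1 < n -> \sum_(i < m) (t i j || t i j.+1) = 2 * c.
Proof.
case: config_t => col _ apart lt_j.
have col_j := col j (ltnW lt_j); have col_j1 := col j.+1 lt_j.
rewrite mul2n -addnn -{1}col_j -col_j1 -big_split /=.
apply: eq_bigr => i _; have := apart i j i j.+1 (ltn_ord i) (ltn_ord i).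
rewrite /close; lia.
Qed.

Lemma tree_config_rows_bound j : j.+1 < n -> 4 * c <= m + (t 0 j || t 0 j.+1).
Proof.
move=> lt_j; rewrite (_ : 4 * c = 2 * (2 * c)); last by rewrite mulnA.
rewrite -(sum_column_pair lt_j).
apply: (sum_no_consecutive (g := fun i => t i j || t i j.+1)) => i lt_i.
by have := block_le1 lt_i lt_j; lia.
Qed.

Lemma tree_config_rows_ge : 0 < c -> 0 < r -> 1 < n -> 4 * c <= m.
Proof.
move=> c_gt0 r_gt0 lt1n; have := tree_config_rows_bound lt1n.
case: (ltnP 1 m) => [lt1m _ | le_m1]; last by lia.
have [j [lt_j t1j]] : exists j, j.+1 < n /\ (t 1 j || t 1 j.+1).
  case: config_t => _ row _.
  have : \sum_(j < n) t 1 j != 0 by rewrite row // -lt0n.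
  rewrite sum_nat_eq0 negb_forall => /existsP [k].
  rewrite eqb0 negbK => t1k; case: (ltnP k.+1 n) => lt_k; first by exists k; rewrite t1k.
  by exists k.-1; rewrite prednK ?t1k ?orbT //; lia.
have := tree_config_rows_bound lt_j; have := block_le1 lt1m lt_j; lia.
Qed.
End TreeConfig.

Definition box_left (t : nat -> nat -> bool) (a : nat) : bool := t (2 * a) 0 || t (2 * a).+1 0.
Definition box_top (t : nat -> nat -> bool) (b : nat) : bool := t 0 (2 * b) || t 0 (2 * b).+1.

Lemma block_has_tree c r n t a j : tree_config c r (4 * c) n t -> a < 2 * c -> j.+1 < n ->
  [|| t (2 * a) j, t (2 * a).+1 j, t (2 * a) j.+1 | t (2 * a).+1 j.+1].
Proof.
move=> config_t lt_a lt_j.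
pose blk b := [|| t (2 * b) j, t (2 * b).+1 j, t (2 * b) j.+1 | t (2 * b).+1 j.+1].
suff : \sum_(b < 2 * c) blk b = 2 * c by move/sum_bool_full; apply.
rewrite -[RHS](sum_column_pair config_t lt_j) (_ : 4 * c = 2 * (2 * c)); last by rewrite mulnA.
rewrite (sum_pairs _ (fun i => t i j || t i j.+1)); apply: eq_bigr => b _.
have lt_b : (2 * b).+1 < 4 * c by have := ltn_ord b; lia.
by have := block_le1 config_t lt_b lt_j; rewrite /blk; lia.
Qed.

Lemma box_column_alternates c r n t a j : tree_config c r (4 * c) n t -> a < 2 * c -> j < n ->
  (t (2 * a) j || t (2 * a).+1 j) = box_left t a (+) odd j.
Proof.
move=> config_t lt_a; elim: j => [|j IH] lt_j; first by rewrite addbF.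
have lt_2a : (2 * a).+1 < 4 * c by lia.
have := block_has_tree config_t lt_a lt_j; have := block_le1 config_t lt_2a lt_j.
rewrite oddS addbN -(IH (ltnW lt_j)); lia.
Qed.

Section SquareConfig.
Variables (c r : nat) (t : nat -> nat -> bool).
Hypothesis config_t : tree_config c r (4 * c) (4 * r) t.

Lemma box_cellE a b (x y : bool) : a < 2 * c -> b < 2 * r ->
  t (2 * a + x) (2 * b + y) = (x (+) box_top t b) && (y (+) box_left t a).
Proof.
move=> lt_a lt_b; have lt_x : 2 * a + x < 4 * c by lia.
have lt_y : 2 * b + y < 4 * r by lia.
have := block_le1 (i := 2 * a) (j := 2 * b) config_t.
have := box_column_alternates config_t lt_a lt_y.
have := box_column_alternates (tree_config_tr config_t) lt_b lt_x.
have [-> ->] : odd (2 * a + x) = x /\ odd (2 * b + y) = y by lia.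
rewrite /box_left /box_top /=.
by case: x y {lt_x lt_y} => [] []; rewrite /= ?addn0 ?addn1 ?addbT ?addbF; lia.
Qed.

Lemma tree_config_box_pattern i j : i < 4 * c -> j < 4 * r ->
  t i j = box_pattern (box_left t) (box_top t) i j.
Proof.
have [a [x ->]] : exists a (x : bool), i = 2 * a + x by exists i./2, (odd i); lia.
have [b [y ->]] : exists b (y : bool), j = 2 * b + y by exists j./2, (odd j); lia.
by move=> lt_i lt_j; rewrite box_patternE box_cellE //; lia.
Qed.

Lemma tree_config_admissible : 0 < c -> 0 < r -> admissible c r (box_left t) (box_top t).
Proof.
move=> c_gt0 r_gt0; have tE := tree_config_box_pattern.
have [c4_gt0 r4_gt0] : 0 < 4 * c /\ 0 < 4 * r by lia.
case: (config_t) => col row apart; split.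
- transitivity (\sum_(i < 4 * c) box_pattern (box_left t) (box_top t) i 0).
    by rewrite sum_box_pattern_col; apply: eq_bigr => a _; rewrite addbF.
  by rewrite -[RHS](col 0 r4_gt0); apply: eq_bigr => i _; rewrite tE.
- transitivity (\sum_(j < 4 * r) box_pattern (box_left t) (box_top t) 0 j).
    by rewrite sum_box_pattern_row; apply: eq_bigr => b _; rewrite addbF.
  by rewrite -[RHS](row 0 c4_gt0); apply: eq_bigr => j _; rewrite tE.
- move=> a b lt_a lt_b; apply/negP => /andP [/andP [nl l1] /andP [nu u1]].
  have t1 : t (2 * a + true) (2 * b + true) by rewrite box_cellE /= ?nl ?nu //; lia.
  have t2 : t (2 * a.+1 + false) (2 * b.+1 + false) by rewrite box_cellE /= ?l1 ?u1.
  by have := apart _ _ _ _ _ _ _ _ t1 t2; rewrite /close; lia.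
- move=> a b lt_a lt_b; apply/negP => /andP [/andP [l0 nl1] /andP [u0 nu1]].
  have t1 : t (2 * a + true) (2 * b.+1 + false) by rewrite box_cellE /= ?l0 ?nu1 //; lia.
  have t2 : t (2 * a.+1 + false) (2 * b + true) by rewrite box_cellE /= ?nl1 ?u0 //; lia.
  by have := apart _ _ _ _ _ _ _ _ t1 t2; rewrite /close; lia.
Qed.
End SquareConfig.

Definition shuriken_pattern (c r : nat) (flip : bool) : nat -> nat -> bool :=
  box_pattern (fun a => (c <= a) (+) flip) (fun b => (b < r) (+) flip).

Lemma shuriken_pattern_config c r flip :
  tree_config c r (4 * c) (4 * r) (shuriken_pattern c r flip).
Proof.
split.
- move=> j _; rewrite sum_box_pattern_col.
  by under eq_bigr do rewrite -addbA; apply: sum_geq_half.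
- move=> i _; rewrite sum_box_pattern_row.
  by under eq_bigr do rewrite ltnNge -addbA addNb -addbN; apply: sum_geq_half.
- move=> i j i' j' lt_i lt_i' lt_j lt_j'.
  by case: flip; rewrite /shuriken_pattern /box_pattern /close; lia.
Qed.

Definition tree_at m n (S : {set 'I_m * 'I_n}) (i j : nat) : bool :=
  [exists p in S, (p.1 == i :> nat) && (p.2 == j :> nat)].

Section TreeAt.
Variables (m n : nat) (S : {set 'I_m * 'I_n}).

Lemma tree_atE (i : 'I_m) (j : 'I_n) : tree_at S i j = ((i, j) \in S).
Proof.
apply/existsP/idP => [[[i' j'] /and3P [pS /eqP/val_inj ei /eqP/val_inj ej]] | ijS].
  by rewrite -ei -ej.
by exists (i, j); rewrite ijS !eqxx.
Qed.

Lemma card_col (j : 'I_n) : #|[set p in S | p.2 == j]| = \sum_(i < m) tree_at S i j.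
Proof.
rewrite -sum1_card big_mkcond /=.
rewrite (eq_bigr (fun p => ((p.1, p.2) \in S) && (p.2 == j) : nat)) => [|[i j'] _]; last first.
  by rewrite inE; case: (_ \in S).
rewrite -(pair_bigA _ (fun i j' => ((i, j') \in S) && (j' == j) : nat)) /=.
apply: eq_bigr => i _; rewrite (bigD1 j) //= eqxx andbT big1 ?addn0 ?tree_atE // => j' /negbTE ->.
by rewrite andbF.
Qed.

Lemma card_row (i : 'I_m) : #|[set p in S | p.1 == i]| = \sum_(j < n) tree_at S i j.
Proof.
rewrite -sum1_card big_mkcond /=.
rewrite (eq_bigr (fun p => ((p.1, p.2) \in S) && (p.1 == i) : nat)) => [|[i' j] _]; last first.
  by rewrite inE; case: (_ \in S).
rewrite -(pair_bigA _ (fun i' j => ((i', j) \in S) && (i' == i) : nat)) /= (bigD1 i) //=.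
rewrite [X in _ + X]big1 ?addn0 => [|i' /negbTE ne]; last first.
  by rewrite big1 // => j _; rewrite ne andbF.
by apply: eq_bigr => j _; rewrite eqxx andbT tree_atE.
Qed.

Lemma valid_configE c r : valid_config c r S <-> tree_config c r m n (tree_at S).
Proof.
split=> [[col [row adj]] | [col row apart]].
  split=> [j lt_j | i lt_i | i j i' j' lt_i lt_i' lt_j lt_j'].
  - by rewrite -(card_col (Ordinal lt_j)) col.
  - by rewrite -(card_row (Ordinal lt_i)) row.
  rewrite -[i]/(Ordinal lt_i : nat) -[j]/(Ordinal lt_j : nat).
  rewrite -[i']/(Ordinal lt_i' : nat) -[j']/(Ordinal lt_j' : nat) !tree_atE => pS qS ci cj.
  have := adj _ _ pS qS; rewrite /king_adj /= -/(close i i') -/(close j j') ci cj !andbT negbK.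
  by move=> /eqP [-> ->].
split=> [j | ]; first by rewrite card_col col.
split=> [i | [i j] [i' j'] pS qS]; first by rewrite card_row row.
apply/negP; rewrite /king_adj /= => /and3P [neq ci cj].
have := apart i j i' j' (ltn_ord i) (ltn_ord i') (ltn_ord j) (ltn_ord j').
rewrite !tree_atE pS qS => /(_ isT isT ci cj) [/val_inj ei /val_inj ej].
by rewrite ei ej eqxx in neq.
Qed.
End TreeAt.

Lemma mem_shuriken1 c r (i : 'I_(4 * c)) (j : 'I_(4 * r)) :
  ((i, j) \in shuriken1 c r) = shuriken_pattern c r false i j.
Proof.
have [a [x ei]] : exists a (x : bool), i = 2 * a + x :> nat by exists i./2, (odd i); lia.
have [b [y ej]] : exists b (y : bool), j = 2 * b + y :> nat by exists j./2, (odd j); lia.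
have lt_a : a.+1 < (2 * c).+1 by have := ltn_ord i; lia.
have lt_b : b.+1 < (2 * r).+1 by have := ltn_ord j; lia.
rewrite inE /= ei ej /shuriken_pattern box_patternE !addbF.
apply/idP/idP => [/existsP [i' /existsP [j' ok]] | ok].
  by have := ltn_ord i'; have := ltn_ord j'; move: ok; lia.
by apply/existsP; exists (Ordinal lt_a); apply/existsP; exists (Ordinal lt_b); move: ok => /=; lia.
Qed.

Lemma mem_shuriken2 c r (i : 'I_(4 * c)) (j : 'I_(4 * r)) :
  ((i, j) \in shuriken2 c r) = shuriken_pattern c r true i j.
Proof.
rewrite inE mem_shuriken1 /= /shuriken_pattern /box_pattern.
by have := ltn_ord i; lia.
Qed.

Lemma valid_config_size c r m n (S : {set 'I_m * 'I_n}) :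
  0 < c -> 0 < r -> 0 < m -> 0 < n -> (m, n) <> (1, 1) ->
  valid_config c r S -> 4 * c <= m /\ 4 * r <= n.
Proof.
move=> c_gt0 r_gt0 m_gt0 n_gt0 mn_11 /valid_configE config_S.
have rows_ge := tree_config_rows_ge config_S c_gt0 r_gt0.
have cols_ge := tree_config_rows_ge (tree_config_tr config_S) r_gt0 c_gt0.
have [lt1m | le_m1] := ltnP 1 m; have [lt1n | le_n1] := ltnP 1 n.
- by split; [exact: rows_ge | exact: cols_ge].
- by have := cols_ge lt1m; lia.
- by have := rows_ge lt1n; lia.
- by exfalso; apply: mn_11; congr pair; lia.
Qed.

Lemma valid_config_shuriken c r (S : {set 'I_(4 * c) * 'I_(4 * r)}) : 0 < c -> 0 < r ->
  valid_config c r S <-> S = shuriken1 c r \/ S = shuriken2 c r.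
Proof.
move=> c_gt0 r_gt0; split=> [/valid_configE config_S | [] ->].
- have [flip [lE uE]] := admissible_shape c_gt0 r_gt0 (tree_config_admissible config_S c_gt0 r_gt0).
  have SE (i : 'I_(4 * c)) (j : 'I_(4 * r)) : ((i, j) \in S) = shuriken_pattern c r flip i j.
    by rewrite -tree_atE (tree_config_box_pattern config_S) // (eq_box_pattern lE uE).
  by case: flip SE {lE uE} => SE; [right | left]; apply/setP => -[i j];
    rewrite SE ?mem_shuriken1 ?mem_shuriken2.
- apply/valid_configE/(eq_tree_config (shuriken_pattern_config c r false)) => i j lt_i lt_j.
  by rewrite -[i]/(Ordinal lt_i : nat) -[j]/(Ordinal lt_j : nat) tree_atE mem_shuriken1.
- apply/valid_configE/(eq_tree_config (shuriken_pattern_config c r true)) => i j lt_i lt_j.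
  by rewrite -[i]/(Ordinal lt_i : nat) -[j]/(Ordinal lt_j : nat) tree_atE mem_shuriken2.
Qed.

Lemma shuriken1_neq2 c r : 0 < c -> 0 < r -> shuriken1 c r <> shuriken2 c r.
Proof.
move=> c_gt0 r_gt0 E; have [lt_0 lt_1] : 0 < 4 * c /\ 1 < 4 * r by lia.
have := mem_shuriken2 (Ordinal lt_0) (Ordinal lt_1).
by rewrite -E mem_shuriken1 /shuriken_pattern /box_pattern /=; lia.
Qed.

Theorem theorem2 (c r : nat) (hc : 0 < c) (hr : 0 < r) :
  (* (i) lower bound on grid size *)
  (forall (m n : nat) (S : {set 'I_m * 'I_n}),
     0 < m -> 0 < n -> (m, n) <> (1, 1) ->
     valid_config c r S -> 4 * c <= m /\ 4 * r <= n) /\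
  (* the 1 x 1 grid admits a configuration only when c = r = 1 *)
  (forall S : {set 'I_1 * 'I_1}, valid_config c r S -> c = 1 /\ r = 1) /\
  (* (ii) exactly two configurations on the 4c x 4r grid *)
  shuriken1 c r <> shuriken2 c r /\
  (forall S : {set 'I_(4 * c) * 'I_(4 * r)},
     valid_config c r S <-> S = shuriken1 c r \/ S = shuriken2 c r).
Proof.
split; [|split; [|split]].
- by move=> m n S; apply: valid_config_size.
- move=> S /valid_configE [col row _].
  by have := col 0 isT; have := row 0 isT; rewrite !big_ord1 /=; lia.
- exact: shuriken1_neq2.
- by move=> S; apply: valid_config_shuriken.
Qed.
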